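(* Let $\mathcal{C},\mathcal{D}$ be generalized categories and $F:\mathcal{C}\to\mathcal{D}$, $G:\mathcal{D}\to\mathcal{C}$ functors. The following are equivalent: (1) there are natural transformations $\eta:\mathrm{id}_{\mathcal{C}}\Rightarrow G\circ F$ and $\varepsilon:F\circ G\Rightarrow \mathrm{id}_{\mathcal{D}}$ such that $(F,G,\eta,\varepsilon)$ is an adjunction, i.e. $G(\varepsilon(y))\cdot\eta(G(y)) = 1_{G(y)}$ for all $y\in\mathcal{D}$ and $\varepsilon(F(x))\cdot F(\eta(x)) = 1_{F(x)}$ for all $x\in\mathcal{C}$; (2) for every $f\in\mathcal{C}$ and $g\in\mathcal{D}$ there is a bijection $\phi_{f,g}:\hom(F(f),g)\to\hom(f,G(g))$ which is natural in $f$ and $g$, meaning: for all $f,f'\in\mathcal{C}$, $g\in\mathcal{D}$, $v\in\hom(f,f')$, $u\in\hom(F(f'),g)$ with $u\cdot F(v)$ defined, $\phi_{f,g}(u\cdot F(v))=\phi_{f',g}(u)\cdot v$; and for all $f\in\mathcal{C}$, $g,g'\in\mathcal{D}$, $v\in\hom(F(f),g)$, $v'\in\hom(g,g')$ with $v'\cdot v$ defined, $\phi_{f,g'}(v'\cdot v)=G(v')\cdot\phi_{f,g}(v)$.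
   Context: A generalized category is a tuple $(\mathcal{C},\le,s,t,\cdot)$ where $\mathcal{C}$ is a set, $\le$ a relation on $\mathcal{C}$, $s,t:\mathcal{C}\to\mathcal{C}$ maps (write $\bar a = s(a)$, $\hat a = t(a)$), and $\cdot$ a partially defined binary operation (write $ab$), such that: (1) $\le$ is a partial order; (2) $ab$ is defined iff $s(a)\le t(b)$; (3) if $(ab)c$ or $a(bc)$ is defined then $(ab)c=a(bc)$; (4) if $ab$ is defined then $s(ab)=s(b)$ and $t(ab)=t(a)$; (5) for every $a$ there is $b$ with $s(b)=t(b)=a$ such that $bc=c$ whenever $bc$ is defined and $cb=c$ whenever $cb$ is defined; this $b$ is unique, denoted $1_a$; (6) if $s(a)=t(a)=a$ then $ba=b$ whenever $ba$ is defined and $ab=b$ whenever $ab$ is defined; (7) if $a\le b$ then $s(a)\le s(b)$, $t(a)\le t(b)$ and $1_a\le 1_b$; and if $a\le b$, $c\le d$ and $ac,bd$ are defined then $ac\le bd$. $\hom(a,b)=\{c\in\mathcal{C}:\bar c=a,\hat c=b\}$. A functor $F:\mathcal{C}\to\mathcal{D}$ is a map with $a\le b\Rightarrow F(a)\le F(b)$, $F(\bar a)=\overline{F(a)}$, $F(\hat a)=\widehat{F(a)}$, $F(ab)=F(a)F(b)$ whenever $ab$ is defined, and $F(1_a)=1_{F(a)}$. For functors $F,G:\mathcal{C}\to\mathcal{D}$, a natural transformation $F\Rightarrow G$ is a pair $(\theta_1,\theta_2)$ of maps $\mathcal{C}\to\mathcal{D}$ such that for all $a$, $\theta_1(a)F(a)$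 and $G(a)\theta_2(a)$ are defined and equal, $\theta_1(a)=\theta_1(b)$ whenever $\hat a=\hat b$, and $\theta_2(a)=\theta_2(b)$ whenever $\bar a=\bar b$; it is identified with the map $\theta(x):=\theta_1(1_x)$ ($=\theta_2(1_x)$), which satisfies $\theta(\hat f)\cdot F(f)=G(f)\cdot\theta(\bar f)$. *)

From mathcomp Require Import ssreflect ssrfun ssrbool.
From Stdlib Require Import ClassicalEpsilon.

Set Implicit Arguments.
Unset Strict Implicit.
Unset Printing Implicit Defensive.

(* The product xy is defined iff s(x) <= t(y) (axiom (2)). *)
Definition is_unit_for {T : Type} (le : T -> T -> Prop) (s t : T -> T)
  (mul : T -> T -> T) (a b : T) : Prop :=
  s b = a /\ t b = a /\
  (forall c, le (s b) (t c) -> mul b c = c) /\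
  (forall c, le (s c) (t b) -> mul c b = c).

(* The partial product is represented by a total
   function [gmul]; by axiom (2) the product [gmul a b] is *defined* exactly
   when [gle (gsrc a) (gtgt b)], and its value is meaningless otherwise. *)
Record gcat := GCat {
  gcarrier :> Type;
  gle : gcarrier -> gcarrier -> Prop;
  gsrc : gcarrier -> gcarrier;
  gtgt : gcarrier -> gcarrier;
  gmul : gcarrier -> gcarrier -> gcarrier;
  gle_refl : forall a, gle a a;
  gle_trans : forall a b c, gle a b -> gle b c -> gle a c;
  gle_antisym : forall a b, gle a b -> gle b a -> a = b;
  gassoc_l : forall a b c, gle (gsrc a) (gtgt b) ->
     gle (gsrc (gmul a b)) (gtgt c) ->
     gle (gsrc b) (gtgt c) /\ gle (gsrc a) (gtgt (gmul b c)) /\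
     gmul (gmul a b) c = gmul a (gmul b c);
  gassoc_r : forall a b c, gle (gsrc b) (gtgt c) ->
     gle (gsrc a) (gtgt (gmul b c)) ->
     gle (gsrc a) (gtgt b) /\ gle (gsrc (gmul a b)) (gtgt c) /\
     gmul (gmul a b) c = gmul a (gmul b c);
  gsrc_mul : forall a b, gle (gsrc a) (gtgt b) -> gsrc (gmul a b) = gsrc b;
  gtgt_mul : forall a b, gle (gsrc a) (gtgt b) -> gtgt (gmul a b) = gtgt a;
  gunit_ex : forall a, exists! b, is_unit_for gle gsrc gtgt gmul a b;
  gid_unit : forall a, gsrc a = a -> gtgt a = a ->
     (forall b, gle (gsrc b) (gtgt a) -> gmul b a = b) /\
     (forall b, gle (gsrc a) (gtgt b) -> gmul a b = b);
  gle_src : forall a b, gle a b -> gle (gsrc a) (gsrc b);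
  gle_tgt : forall a b, gle a b -> gle (gtgt a) (gtgt b);
  gle_unit : forall a b ia ib, gle a b ->
     is_unit_for gle gsrc gtgt gmul a ia ->
     is_unit_for gle gsrc gtgt gmul b ib -> gle ia ib;
  gle_mul : forall a b c d, gle a b -> gle c d ->
     gle (gsrc a) (gtgt c) -> gle (gsrc b) (gtgt d) ->
     gle (gmul a c) (gmul b d)
}.

Arguments gle {g} _ _.
Arguments gsrc {g} _.
Arguments gtgt {g} _.
Arguments gmul {g} _ _.

Lemma gunit_ex' (C : gcat) (a : C) :
  exists b, is_unit_for gle gsrc gtgt gmul a b.
Proof. by case: (gunit_ex a) => b [Hb _]; exists b. Qed.

Definition gone {C : gcat} (a : C) : C :=
  proj1_sig (constructive_indefinite_description _ (gunit_ex' a)).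

Definition ghom (C : gcat) (a b : C) : Type :=
  { c : C | gsrc c = a /\ gtgt c = b }.

Record gfunctor (C D : gcat) := GFunctor {
  gfmap :> C -> D;
  gf_mono : forall a b : C, gle a b -> gle (gfmap a) (gfmap b);
  gf_src : forall a : C, gfmap (gsrc a) = gsrc (gfmap a);
  gf_tgt : forall a : C, gfmap (gtgt a) = gtgt (gfmap a);
  gf_mul : forall a b : C, gle (gsrc a) (gtgt b) ->
     gfmap (gmul a b) = gmul (gfmap a) (gfmap b);
  gf_one : forall a : C, gfmap (gone a) = gone (gfmap a)
}.

Definition is_nat_trans (C D : gcat) (F G : C -> D) (th1 th2 : C -> D) : Prop :=
  (forall a : C,
     gle (gsrc (th1 a)) (gtgt (F a)) /\
     gle (gsrc (G a)) (gtgt (th2 a)) /\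
     gmul (th1 a) (F a) = gmul (G a) (th2 a)) /\
  (forall a b : C, gtgt a = gtgt b -> th1 a = th1 b) /\
  (forall a b : C, gsrc a = gsrc b -> th2 a = th2 b).

(* The map x |-> theta(x) := theta_1(1_x) identified with (th1, th2). *)
Definition nt_comp {C D : gcat} (th1 : C -> D) (x : C) : D := th1 (gone x).

(* Everything is expressed through the transposition [u |-> G u . eta_f] of
   [u : F f -> g], where [eta_f] is the unit component at [f].  Given unit
   and counit, it is inverted by [w |-> eps_g . F w] thanks to the two
   triangle identities, it is natural in the target by associativity and in
   the source by naturality of [eta].  Conversely, naturality in the target
   at [1_(F f)] shows that any natural bijection [phi] is this transposition
   for [eta_f := phi (1_(F f))]; taking [eps_g := phi^-1 (1_(G g))], the
   first triangle identity holds by construction, and the naturality of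
   [eta] and [eps] and the second triangle identity follow from naturality
   of [phi] in the source and injectivity of [phi]. *)

From mathcomp Require Import ssreflect ssrfun ssrbool.
From Stdlib Require Import ProofIrrelevance ClassicalEpsilon.

Set Implicit Arguments.
Unset Strict Implicit.
Unset Printing Implicit Defensive.

Section GCatTheory.
Variable C : gcat.
Implicit Types a b c : C.

Lemma gone_unit a : is_unit_for gle gsrc gtgt gmul a (gone a).
Proof. by rewrite /gone; case: constructive_indefinite_description. Qed.

Lemma gsrc_one a : gsrc (gone a) = a.
Proof. by case: (gone_unit a). Qed.

Lemma gtgt_one a : gtgt (gone a) = a.
Proof. by case: (gone_unit a) => _ []. Qed.

Lemma gle_eq a b : a = b -> gle a b.
Proof. by move=> ->; apply: gle_refl. Qed.

Lemma gmul1c_le a c : gle a (gtgt c) -> gmul (gone a) c = c.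
Proof.
case: (gone_unit a) => src1 [_ [mul1 _]] le_ac.
by apply: mul1; rewrite src1.
Qed.

Lemma gmulc1_le a c : gle (gsrc c) a -> gmul c (gone a) = c.
Proof.
case: (gone_unit a) => _ [tgt1 [_ mul1]] le_ca.
by apply: mul1; rewrite tgt1.
Qed.

Lemma gmul1c a c : gtgt c = a -> gmul (gone a) c = c.
Proof. by move=> tgt_c; apply/gmul1c_le/gle_eq. Qed.

Lemma gmulc1 a c : gsrc c = a -> gmul c (gone a) = c.
Proof. by move=> src_c; apply/gmulc1_le/gle_eq. Qed.

Lemma gsrcM a b : gsrc a = gtgt b -> gsrc (gmul a b) = gsrc b.
Proof. by move=> ab; apply/gsrc_mul/gle_eq. Qed.

Lemma gtgtM a b : gsrc a = gtgt b -> gtgt (gmul a b) = gtgt a.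
Proof. by move=> ab; apply/gtgt_mul/gle_eq. Qed.

Lemma gmulA a b c : gsrc a = gtgt b -> gsrc b = gtgt c ->
  gmul a (gmul b c) = gmul (gmul a b) c.
Proof.
move=> ab bc; have abc : gsrc (gmul a b) = gtgt c by rewrite gsrcM.
by have [_ [_ ->]] := gassoc_l (gle_eq ab) (gle_eq abc).
Qed.

Lemma ghom_inj a b : injective (fun u : ghom a b => proj1_sig u).
Proof.
case=> u pu [w pw] /= eq_uw.
by subst w; rewrite (proof_irrelevance _ pu pw).
Qed.

Definition ghom1 a : ghom a a := exist _ (gone a) (conj (gsrc_one a) (gtgt_one a)).

End GCatTheory.

Lemma gfM (C D : gcat) (F : gfunctor C D) (a b : C) :
  gsrc a = gtgt b -> F (gmul a b) = gmul (F a) (F b).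
Proof. by move=> ab; apply/gf_mul/gle_eq. Qed.

Section NatTransComponent.
Variables (C D : gcat) (F G th1 th2 : C -> D).
Hypothesis F1 : forall x, F (gone x) = gone (F x).
Hypothesis G1 : forall x, G (gone x) = gone (G x).
Hypothesis th_nat : is_nat_trans F G th1 th2.

Lemma nat_trans_component_one x : th2 (gone x) = th1 (gone x).
Proof.
have [/(_ (gone x)) [] ] := th_nat.
rewrite F1 G1 gtgt_one gsrc_one => le1 [le2] + _.
by rewrite gmulc1_le // gmul1c_le.
Qed.

Lemma nt_comp_src x : gsrc (nt_comp th1 x) = F x.
Proof.
have [/(_ (gone x)) [le1 _] _] := th_nat.
have := gsrc_mul le1; move: le1; rewrite F1 gtgt_one gsrc_one => le1.
by rewrite gmulc1_le.
Qed.

Lemma nt_comp_tgt x : gtgt (nt_comp th1 x) = G x.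
Proof.
have [/(_ (gone x)) [_ [le2 _]] _] := th_nat.
have := gtgt_mul le2; move: le2.
rewrite G1 gtgt_one gsrc_one nat_trans_component_one => le2.
by rewrite gmul1c_le.
Qed.

Lemma nt_comp_natural a :
  gmul (nt_comp th1 (gtgt a)) (F a) = gmul (G a) (nt_comp th1 (gsrc a)).
Proof.
have [/(_ a) [_ [_ comm]] [th1_tgt th2_src]] := th_nat.
have -> : nt_comp th1 (gtgt a) = th1 a by apply: th1_tgt; rewrite gtgt_one.
have -> : nt_comp th1 (gsrc a) = th2 a.
  by rewrite /nt_comp -nat_trans_component_one; apply: th2_src; rewrite gsrc_one.
exact: comm.
Qed.

End NatTransComponent.

Section NatTransOfComponent.
Variables (C D : gcat) (F G theta : C -> D).
Hypothesis F_tgt : forall a, F (gtgt a) = gtgt (F a).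
Hypothesis G_src : forall a, G (gsrc a) = gsrc (G a).
Hypothesis theta_src : forall x, gsrc (theta x) = F x.
Hypothesis theta_tgt : forall x, gtgt (theta x) = G x.
Hypothesis theta_natural :
  forall a, gmul (theta (gtgt a)) (F a) = gmul (G a) (theta (gsrc a)).

Lemma nat_trans_of_component :
  is_nat_trans F G (fun a => theta (gtgt a)) (fun a => theta (gsrc a)).
Proof.
split; last by split=> a b /= ->.
move=> a; rewrite theta_src theta_tgt F_tgt G_src.
by split; [|split]; [apply: gle_refl | apply: gle_refl | apply: theta_natural].
Qed.

End NatTransOfComponent.

Lemma bijective_family_inv (I J : Type) (A B : I -> J -> Type)
    (phi : forall i j, A i j -> B i j) :
  (forall i j, bijective (phi i j)) ->
  exists2 psi : forall i j, B i j -> A i j,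
    forall i j, cancel (phi i j) (psi i j) & forall i j, cancel (psi i j) (phi i j).
Proof.
move=> phi_bij.
have inv i j : exists psi, cancel (phi i j) psi /\ cancel psi (phi i j).
  by case: (phi_bij i j) => psi phiK psiK; exists psi.
exists (fun i j => proj1_sig (constructive_indefinite_description _ (inv i j))).
  by move=> i j; case: constructive_indefinite_description => psi [].
by move=> i j; case: constructive_indefinite_description => psi [].
Qed.

Section HomAdjunctionDefs.
Variables (C D : gcat) (F : gfunctor C D) (G : gfunctor D C).

Definition is_adjunction (eta1 eta2 : C -> C) (eps1 eps2 : D -> D) : Prop :=
  is_nat_trans (fun x : C => x) (fun x : C => G (F x)) eta1 eta2 /\
  is_nat_trans (fun y : D => F (G y)) (fun y : D => y) eps1 eps2 /\
  (forall y : D, gmul (G (nt_comp eps1 y)) (nt_comp eta1 (G y)) = gone (G y)) /\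
  (forall x : C, gmul (nt_comp eps1 (F x)) (F (nt_comp eta1 x)) = gone (F x)).

Definition natural_in_source (phi : forall f g, ghom (F f) g -> ghom f (G g)) :=
  forall (f f' : C) (g : D) (v : ghom f f') (u : ghom (F f') g) (x : ghom (F f) g),
    gle (gsrc (proj1_sig u)) (gtgt (F (proj1_sig v))) ->
    proj1_sig x = gmul (proj1_sig u) (F (proj1_sig v)) ->
    proj1_sig (phi f g x) = gmul (proj1_sig (phi f' g u)) (proj1_sig v).

Definition natural_in_target (phi : forall f g, ghom (F f) g -> ghom f (G g)) :=
  forall (f : C) (g g' : D) (v : ghom (F f) g) (v' : ghom g g') (x : ghom (F f) g'),
    gle (gsrc (proj1_sig v')) (gtgt (proj1_sig v)) ->
    proj1_sig x = gmul (proj1_sig v') (proj1_sig v) ->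
    proj1_sig (phi f g' x) = gmul (G (proj1_sig v')) (proj1_sig (phi f g v)).

End HomAdjunctionDefs.

(* [eta] and [eps] are component maps [x |-> theta (1_x)] of the unit and
   the counit, as produced by [nt_comp]. *)
Section Transposition.
Variables (C D : gcat) (F : gfunctor C D) (G : gfunctor D C).
Variables (eta : C -> C) (eps : D -> D).
Hypothesis eta_src : forall x, gsrc (eta x) = x.
Hypothesis eta_tgt : forall x, gtgt (eta x) = G (F x).
Hypothesis eps_src : forall y, gsrc (eps y) = F (G y).
Hypothesis eps_tgt : forall y, gtgt (eps y) = y.

Definition transpose (f : C) (u : D) : C := gmul (G u) (eta f).
Definition cotranspose (g : D) (w : C) : D := gmul (eps g) (F w).

Lemma transpose_composable f u : gsrc u = F f -> gsrc (G u) = gtgt (eta f).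
Proof. by move=> src_u; rewrite -gf_src src_u eta_tgt. Qed.

Lemma cotranspose_composable g w : gtgt w = G g -> gsrc (eps g) = gtgt (F w).
Proof. by move=> tgt_w; rewrite -gf_tgt tgt_w eps_src. Qed.

Lemma transpose_src f u : gsrc u = F f -> gsrc (transpose f u) = f.
Proof.
move=> src_u.
by rewrite /transpose gsrcM ?eta_src ?(transpose_composable src_u).
Qed.

Lemma transpose_tgt f u : gsrc u = F f -> gtgt (transpose f u) = G (gtgt u).
Proof.
move=> src_u.
by rewrite /transpose gtgtM -?gf_tgt ?(transpose_composable src_u).
Qed.

Lemma cotranspose_src g w : gtgt w = G g -> gsrc (cotranspose g w) = F (gsrc w).
Proof.
move=> tgt_w.
by rewrite /cotranspose gsrcM -?gf_src ?(cotranspose_composable tgt_w).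
Qed.

Lemma cotranspose_tgt g w : gtgt w = G g -> gtgt (cotranspose g w) = g.
Proof.
move=> tgt_w.
by rewrite /cotranspose gtgtM ?eps_tgt ?(cotranspose_composable tgt_w).
Qed.

Lemma transpose_ghomP f g (u : ghom (F f) g) :
  gsrc (transpose f (proj1_sig u)) = f /\ gtgt (transpose f (proj1_sig u)) = G g.
Proof.
case: u => u [src_u tgt_u] /=.
by rewrite transpose_src // transpose_tgt // tgt_u.
Qed.

Lemma cotranspose_ghomP f g (w : ghom f (G g)) :
  gsrc (cotranspose g (proj1_sig w)) = F f /\ gtgt (cotranspose g (proj1_sig w)) = g.
Proof.
case: w => w [src_w tgt_w] /=.
by rewrite cotranspose_src // cotranspose_tgt // src_w.
Qed.

Definition transpose_ghom f g (u : ghom (F f) g) : ghom f (G g) :=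
  exist _ _ (transpose_ghomP u).

Definition cotranspose_ghom f g (w : ghom f (G g)) : ghom (F f) g :=
  exist _ _ (cotranspose_ghomP w).

Lemma transpose_one x : transpose x (gone (F x)) = eta x.
Proof. by rewrite /transpose gf_one gmul1c. Qed.

Lemma transpose_natural_r f v v' :
  gsrc v' = gtgt v -> gsrc v = F f ->
  transpose f (gmul v' v) = gmul (G v') (transpose f v).
Proof.
move=> v'v src_v; rewrite /transpose gfM // gmulA //.
  by rewrite -gf_src v'v gf_tgt.
exact: transpose_composable.
Qed.

Section FromUnitCounit.
Hypothesis eta_natural :
  forall a, gmul (eta (gtgt a)) a = gmul (G (F a)) (eta (gsrc a)).
Hypothesis eps_natural :
  forall b, gmul (eps (gtgt b)) (F (G b)) = gmul b (eps (gsrc b)).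
Hypothesis triangle_G : forall y, gmul (G (eps y)) (eta (G y)) = gone (G y).
Hypothesis triangle_F : forall x, gmul (eps (F x)) (F (eta x)) = gone (F x).

Lemma transpose_natural_l u v :
  gsrc u = F (gtgt v) ->
  transpose (gsrc v) (gmul u (F v)) = gmul (transpose (gtgt v) u) v.
Proof.
move=> src_u; have uFv : gsrc u = gtgt (F v) by rewrite -gf_tgt.
have GuGFv : gsrc (G u) = gtgt (G (F v)) by rewrite -gf_src uFv gf_tgt.
have GFv_eta : gsrc (G (F v)) = gtgt (eta (gsrc v)) by rewrite eta_tgt -!gf_src.
rewrite /transpose gfM // -gmulA // -eta_natural gmulA ?eta_src //.
exact: transpose_composable.
Qed.

Lemma transposeK f u : gsrc u = F f -> cotranspose (gtgt u) (transpose f u) = u.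
Proof.
move=> src_u; have Gu_eta := transpose_composable src_u.
have eps_FGu : gsrc (eps (gtgt u)) = gtgt (F (G u)).
  by apply: cotranspose_composable; rewrite gf_tgt.
have FGu_Feta : gsrc (F (G u)) = gtgt (F (eta f)) by rewrite -gf_src Gu_eta gf_tgt.
have eps_Feta : gsrc (eps (F f)) = gtgt (F (eta f)).
  by rewrite eps_src -gf_tgt eta_tgt.
rewrite /cotranspose /transpose gfM // gmulA // eps_natural src_u.
by rewrite -gmulA ?eps_tgt // triangle_F gmulc1.
Qed.

Lemma cotransposeK g w : gtgt w = G g -> transpose (gsrc w) (cotranspose g w) = w.
Proof.
move=> tgt_w; have eps_Fw := cotranspose_composable tgt_w.
have Geps_GFw : gsrc (G (eps g)) = gtgt (G (F w)) by rewrite -gf_src eps_Fw gf_tgt.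
have GFw_eta : gsrc (G (F w)) = gtgt (eta (gsrc w)) by rewrite eta_tgt -!gf_src.
have Geps_eta : gsrc (G (eps g)) = gtgt (eta (G g)).
  by rewrite -gf_src eps_src eta_tgt.
rewrite /cotranspose /transpose gfM // -gmulA // -eta_natural tgt_w.
by rewrite gmulA ?eta_src // triangle_G gmul1c.
Qed.

Lemma unit_counit_hom_bijection :
  exists phi : forall f g, ghom (F f) g -> ghom f (G g),
    (forall f g, bijective (phi f g)) /\
    natural_in_source phi /\ natural_in_target phi.
Proof.
exists transpose_ghom; split; [|split].
- move=> f g; exists (@cotranspose_ghom f g).
    case=> u [src_u tgt_u]; subst g; apply: ghom_inj => /=.
    exact: transposeK.
  case=> w [src_w tgt_w]; subst f; apply: ghom_inj => /=.
  exact: cotransposeK.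
- move=> f f' g [v [src_v tgt_v]] [u [src_u _]] x /= _ ->; subst f f'.
  exact: transpose_natural_l.
- move=> f g g' [v [src_v tgt_v]] [v' [src_v' _]] x /= _ ->; subst g.
  exact: transpose_natural_r.
Qed.

End FromUnitCounit.

Section FromTranspose.
Hypothesis transpose_inj : forall f u1 u2,
  gsrc u1 = F f -> gsrc u2 = F f -> gtgt u1 = gtgt u2 ->
  transpose f u1 = transpose f u2 -> u1 = u2.
Hypothesis transpose_natural : forall u v,
  gsrc u = F (gtgt v) ->
  transpose (gsrc v) (gmul u (F v)) = gmul (transpose (gtgt v) u) v.
Hypothesis transpose_counit : forall y, transpose (G y) (eps y) = gone (G y).

Lemma unit_natural a : gmul (eta (gtgt a)) a = gmul (G (F a)) (eta (gsrc a)).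
Proof.
have := transpose_natural (u := gone (F (gtgt a))) (v := a).
rewrite gsrc_one gmul1c -?gf_tgt // transpose_one => <- //.
Qed.

Lemma counit_natural b : gmul (eps (gtgt b)) (F (G b)) = gmul b (eps (gsrc b)).
Proof.
have b_eps : gsrc b = gtgt (eps (gsrc b)) by rewrite eps_tgt.
apply: (@transpose_inj (G (gsrc b))).
- by rewrite gsrcM -?gf_src // eps_src -gf_tgt -gf_tgt.
- by rewrite gsrcM.
- by rewrite gtgtM ?gtgtM ?eps_tgt // eps_src -gf_tgt -gf_tgt.
have lhs : transpose (G (gsrc b)) (gmul (eps (gtgt b)) (F (G b))) = G b.
  rewrite gf_src transpose_natural; last by rewrite eps_src gf_tgt.
  by rewrite -gf_tgt transpose_counit gmul1c // gf_tgt.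
have rhs : transpose (G (gsrc b)) (gmul b (eps (gsrc b))) = G b.
  by rewrite transpose_natural_r ?eps_src // transpose_counit gmulc1 // -gf_src.
by rewrite lhs rhs.
Qed.

Lemma counit_F_unit x : gmul (eps (F x)) (F (eta x)) = gone (F x).
Proof.
have eps_Feta : gsrc (eps (F x)) = F (gtgt (eta x)) by rewrite eps_src eta_tgt.
apply: (@transpose_inj x).
- by rewrite gsrcM -?gf_src ?eta_src // -gf_tgt.
- by rewrite gsrc_one.
- by rewrite gtgtM ?eps_tgt ?gtgt_one // -gf_tgt.
have := transpose_natural eps_Feta; rewrite eta_src eta_tgt transpose_counit => ->.
by rewrite transpose_one gmul1c ?eta_tgt.
Qed.

End FromTranspose.
End Transposition.

Section HomBijection.
Variables (C D : gcat) (F : gfunctor C D) (G : gfunctor D C).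
Variable phi : forall f g, ghom (F f) g -> ghom f (G g).
Variable psi : forall f g, ghom f (G g) -> ghom (F f) g.
Arguments phi : clear implicits.
Arguments psi : clear implicits.
Hypothesis phiK : forall f g, cancel (phi f g) (psi f g).
Hypothesis psiK : forall f g, cancel (psi f g) (phi f g).
Hypothesis phi_natural_src : natural_in_source phi.
Hypothesis phi_natural_tgt : natural_in_target phi.

Definition hom_unit (x : C) : C := proj1_sig (phi x (F x) (ghom1 (F x))).
Definition hom_counit (y : D) : D := proj1_sig (psi (G y) y (ghom1 (G y))).

Lemma hom_unit_src x : gsrc (hom_unit x) = x.
Proof. by case: (proj2_sig (phi x (F x) (ghom1 (F x)))). Qed.

Lemma hom_unit_tgt x : gtgt (hom_unit x) = G (F x).
Proof. by case: (proj2_sig (phi x (F x) (ghom1 (F x)))). Qed.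

Lemma hom_counit_src y : gsrc (hom_counit y) = F (G y).
Proof. by case: (proj2_sig (psi (G y) y (ghom1 (G y)))). Qed.

Lemma hom_counit_tgt y : gtgt (hom_counit y) = y.
Proof. by case: (proj2_sig (psi (G y) y (ghom1 (G y)))). Qed.

(* Naturality in the target at [v = 1_(F f)]. *)
Lemma phi_transposeE f g (u : ghom (F f) g) :
  proj1_sig (phi f g u) = transpose G hom_unit f (proj1_sig u).
Proof.
case: (proj2_sig u) => src_u _.
apply: (phi_natural_tgt (v := ghom1 (F f))) => /=.
  by rewrite gtgt_one src_u; apply: gle_refl.
by rewrite gmulc1.
Qed.

Lemma hom_transpose_inj f u1 u2 :
  gsrc u1 = F f -> gsrc u2 = F f -> gtgt u1 = gtgt u2 ->
  transpose G hom_unit f u1 = transpose G hom_unit f u2 -> u1 = u2.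
Proof.
move=> src_u1 src_u2 tgt_u12 eq_tr.
pose h1 : ghom (F f) (gtgt u2) := exist _ u1 (conj src_u1 tgt_u12).
pose h2 : ghom (F f) (gtgt u2) := exist _ u2 (conj src_u2 erefl).
suff /(can_inj (@phiK _ _))/(congr1 (@proj1_sig _ _)) : phi _ _ h1 = phi _ _ h2 by [].
by apply: ghom_inj; rewrite /= !phi_transposeE.
Qed.

Lemma hom_transpose_natural u v :
  gsrc u = F (gtgt v) ->
  transpose G hom_unit (gsrc v) (gmul u (F v)) =
  gmul (transpose G hom_unit (gtgt v) u) v.
Proof.
move=> src_u; have uFv : gsrc u = gtgt (F v) by rewrite -gf_tgt.
have src_uFv : gsrc (gmul u (F v)) = F (gsrc v) by rewrite gsrcM // gf_src.
pose hv : ghom (gsrc v) (gtgt v) := exist _ v (conj erefl erefl).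
pose hu : ghom (F (gtgt v)) (gtgt u) := exist _ u (conj src_u erefl).
pose hx : ghom (F (gsrc v)) (gtgt u) := exist _ _ (conj src_uFv (gtgtM uFv)).
rewrite -(phi_transposeE hx) -(phi_transposeE hu).
exact: (phi_natural_src (v := hv) (u := hu) (x := hx) (gle_eq uFv) erefl).
Qed.

Lemma hom_transpose_counit y :
  transpose G hom_unit (G y) (hom_counit y) = gone (G y).
Proof. by rewrite -phi_transposeE psiK. Qed.

Lemma hom_bijection_adjunction :
  exists eta1 eta2 eps1 eps2, is_adjunction F G eta1 eta2 eps1 eps2.
Proof.
have tr_inj := hom_transpose_inj.
have tr_nat := hom_transpose_natural.
have tr_counit := hom_transpose_counit.
exists (fun a => hom_unit (gtgt a)), (fun a => hom_unit (gsrc a)).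
exists (fun b => hom_counit (gtgt b)), (fun b => hom_counit (gsrc b)).
split; [|split; [|split]].
- apply: nat_trans_of_component hom_unit_src hom_unit_tgt _ => // [a|].
    by rewrite !gf_src.
  exact: unit_natural hom_unit_tgt tr_nat.
- apply: nat_trans_of_component hom_counit_src hom_counit_tgt _ => // [a|].
    by rewrite !gf_tgt.
  exact: counit_natural hom_unit_tgt hom_counit_src hom_counit_tgt
    tr_inj tr_nat tr_counit.
- by move=> y; rewrite /nt_comp !gtgt_one; apply: tr_counit.
- move=> x; rewrite /nt_comp !gtgt_one.
  exact: (counit_F_unit hom_unit_src hom_unit_tgt hom_counit_src hom_counit_tgt
    tr_inj tr_nat tr_counit x).
Qed.

End HomBijection.

Lemma adjunction_hom_bijection (C D : gcat) (F : gfunctor C D) (G : gfunctor D C)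
    (eta1 eta2 : C -> C) (eps1 eps2 : D -> D) :
  is_adjunction F G eta1 eta2 eps1 eps2 ->
  exists phi : forall f g, ghom (F f) g -> ghom f (G g),
    (forall f g, bijective (phi f g)) /\
    natural_in_source phi /\ natural_in_target phi.
Proof.
case=> eta_nat [eps_nat [triangle_G triangle_F]].
have GF1 x : G (F (gone x)) = gone (G (F x)) by rewrite !gf_one.
have FG1 y : F (G (gone y)) = gone (F (G y)) by rewrite !gf_one.
apply: (unit_counit_hom_bijection (eta := nt_comp eta1) (eps := nt_comp eps1))
  triangle_G triangle_F.
- exact: (nt_comp_src (F := id) (fun x => erefl) eta_nat).
- exact: (nt_comp_tgt (F := id) (fun x => erefl) GF1 eta_nat).
- exact: nt_comp_src FG1 eps_nat.
- exact: (nt_comp_tgt (G := id) FG1 (fun y => erefl) eps_nat).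
- exact: (nt_comp_natural (F := id) (fun x => erefl) GF1 eta_nat).
- exact: (nt_comp_natural (G := id) FG1 (fun y => erefl) eps_nat).
Qed.

Theorem mainTheorem2 (C D : gcat) (F : gfunctor C D) (G : gfunctor D C) :
  (exists (eta1 eta2 : C -> C) (eps1 eps2 : D -> D),
     is_nat_trans (fun x : C => x) (fun x : C => G (F x)) eta1 eta2 /\
     is_nat_trans (fun y : D => F (G y)) (fun y : D => y) eps1 eps2 /\
     (forall y : D,
        gmul (G (nt_comp eps1 y)) (nt_comp eta1 (G y)) = gone (G y)) /\
     (forall x : C,
        gmul (nt_comp eps1 (F x)) (F (nt_comp eta1 x)) = gone (F x)))
  <->
  (exists phi : forall (f : C) (g : D), ghom (F f) g -> ghom f (G g),
     (forall (f : C) (g : D), bijective (phi f g)) /\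
     (forall (f f' : C) (g : D) (v : ghom f f') (u : ghom (F f') g)
             (x : ghom (F f) g),
        gle (gsrc (proj1_sig u)) (gtgt (F (proj1_sig v))) ->
        proj1_sig x = gmul (proj1_sig u) (F (proj1_sig v)) ->
        proj1_sig (phi f g x) = gmul (proj1_sig (phi f' g u)) (proj1_sig v)) /\
     (forall (f : C) (g g' : D) (v : ghom (F f) g) (v' : ghom g g')
             (x : ghom (F f) g'),
        gle (gsrc (proj1_sig v')) (gtgt (proj1_sig v)) ->
        proj1_sig x = gmul (proj1_sig v') (proj1_sig v) ->
        proj1_sig (phi f g' x) = gmul (G (proj1_sig v')) (proj1_sig (phi f g v)))).
Proof.
split=> [[eta1 [eta2 [eps1 [eps2 adj]]]] | [phi [phi_bij [nat_src nat_tgt]]]].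
  exact: adjunction_hom_bijection adj.
have [psi phiK psiK] := bijective_family_inv phi_bij.
exact: hom_bijection_adjunction phiK psiK nat_src nat_tgt.
Qed.
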